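(* In the on-policy TD$(n)$ setting of the context, suppose $\epsilon_k\equiv\epsilon\le\frac{1-\beta^n}{16(1+\beta^{2n})}$. Then for all $k\ge0$, $$\mathbb{E}[\|V_k-V_\pi\|_\Lambda^2]\le\|V_0-V_\pi\|_\Lambda^2(1-(1-\beta^n)\epsilon)^k+\frac{8}{1-\beta^n}\left(\frac{(1-\beta^n)^2}{(1-\beta)^2}+2\beta^{2n}\|V_\pi\|_\Lambda^2\right)\epsilon.$$
   Context: Finite MDP: finite state space $\mathcal S$, finite action space $\mathcal A$, transition matrices $P_a$, reward $\mathcal R:\mathcal S\times\mathcal A\to[0,1]$, discount $\beta\in(0,1)$. Fix a policy $\pi$ with value function $V_\pi(s)=\mathbb{E}_\pi[\sum_{k\ge0}\beta^k\mathcal R(S_k,A_k)\mid S_0=s]$, and assume the Markov chain $\{S_k\}$ under $\pi$ has a unique stationary distribution $\lambda$ with $\lambda(s)>0$ for all $s$. Let $\Lambda=\mathrm{diag}(\lambda)$ and $\|V\|_\Lambda=(V^\top\Lambda V)^{1/2}$. Fix $n\ge1$. TD$(n)$: from deterministic $V_0$, at each iteration $k$ and for each $s$, a fresh trajectory $S_0^s=s,A_0^s,\dots,S_n^s$ is sampled under $\pi$ (independently of the past given the current iterate), and $V_{k+1}(s)=V_k(s)+\epsilon_k(\sum_{t=0}^{n-1}\beta^t\mathcal R(S_t^s,A_t^s)+\beta^nV_k(S_n^s)-V_k(s))$. *)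

From Stdlib Require Import Reals List.
Import ListNotations.
Open Scope R_scope.

(* States are 0..nS-1, actions are 0..nA-1. *)

Definition fsum (m : nat) (f : nat -> R) : R :=
  fold_right Rplus 0 (map f (seq 0 m)).

Definition lsum (l : list R) : R := fold_right Rplus 0 l.

Fixpoint allseqs {X : Type} (m : nat) (xs : list X) : list (list X) :=
  match m with
  | O => [[]]
  | S m' => flat_map (fun x => map (cons x) (allseqs m' xs)) xs
  end.

(* A trajectory from a start state: list of (action taken, next state) pairs.
   [(a0,s1);(a1,s2);...;(a_{m-1},s_m)] *)
Definition traj := list (nat * nat).

Definition trajs (nS nA m : nat) : list traj :=
  allseqs m (list_prod (seq 0 nA) (seq 0 nS)).

(* probability of a trajectory started at s under policy pi and kernel P
   (P a s s' = probability of moving s -> s' under action a) *)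
Fixpoint traj_prob (P : nat -> nat -> nat -> R) (pi : nat -> nat -> R)
    (s : nat) (tr : traj) : R :=
  match tr with
  | [] => 1
  | (a, s') :: tr' => pi s a * P a s s' * traj_prob P pi s' tr'
  end.

(* discounted return along the trajectory, bootstrapped with V at the end:
   sum_{t<m} beta^t R(S_t,A_t) + beta^m V(S_m) *)
Fixpoint traj_ret (Rw : nat -> nat -> R) (beta : R) (V : nat -> R)
    (s : nat) (tr : traj) : R :=
  match tr with
  | [] => V s
  | (a, s') :: tr' => Rw s a + beta * traj_ret Rw beta V s' tr'
  end.

Definition vN (nS nA : nat) (P : nat -> nat -> nat -> R) (pi : nat -> nat -> R)
    (Rw : nat -> nat -> R) (beta : R) (N : nat) (s : nat) : R :=
  lsum (map (fun tr => traj_prob P pi s tr * traj_ret Rw beta (fun _ => 0) s tr)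
            (trajs nS nA N)).

Definition Ppi (nA : nat) (P : nat -> nat -> nat -> R) (pi : nat -> nat -> R)
    (s s' : nat) : R :=
  fsum nA (fun a => pi s a * P a s s').

(* squared weighted norm ||V||_Lambda^2 = sum_s lambda(s) V(s)^2 *)
Definition normL2 (nS : nat) (lam : nat -> R) (V : nat -> R) : R :=
  fsum nS (fun s => lam s * V s ^ 2).

(* One joint sample of an iteration: one trajectory of length n per state,
   sampled independently (the trajectory for state s is nth s w []). *)
Definition joint_samples (nS nA n : nat) : list (list traj) :=
  allseqs nS (trajs nS nA n).

Definition joint_prob (nS : nat) (P : nat -> nat -> nat -> R)
    (pi : nat -> nat -> R) (w : list traj) : R :=
  fold_right Rmult 1 (map (fun s => traj_prob P pi s (nth s w [])) (seq 0 nS)).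

Definition td_update (Rw : nat -> nat -> R) (beta eps : R) (V : nat -> R)
    (w : list traj) : nat -> R :=
  fun s => V s + eps * (traj_ret Rw beta V s (nth s w []) - V s).

(* ExpTD k g V0 = E[ g(V_k) ] where V_k is the k-th TD(n) iterate (constant
   step size eps, fresh independent samples at every iteration) from V0. *)
Fixpoint ExpTD (nS nA n : nat) (P : nat -> nat -> nat -> R)
    (pi : nat -> nat -> R) (Rw : nat -> nat -> R) (beta eps : R)
    (k : nat) (g : (nat -> R) -> R) (V : nat -> R) : R :=
  match k with
  | O => g V
  | S k' =>
      lsum (map (fun w => joint_prob nS P pi w *
                   ExpTD nS nA n P pi Rw beta eps k' g (td_update Rw beta eps V w))
                (joint_samples nS nA n))
  end.

From Stdlib Require Import Reals List Lra Lia Psatz.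
Import ListNotations.
Open Scope R_scope.

(* Write e_k = V_k - V_pi.  For each state s, the update mixes e_k(s) with the
   n-step error beta^n e_k(S_n) plus a noise term whose second moment is at most
   2 (1 - beta^n)^2 / (1 - beta)^2 + 4 beta^(2n) (V_pi(S_n)^2 + e_k(S_n)^2); the
   mean is controlled by the Bellman equation V_pi = E[n-step return with V_pi].
   Averaging over the stationary distribution lambda turns E_s[f(S_n)] back into
   E_lambda[f], so E||e_(k+1)||^2 <= rho E||e_k||^2 + eps^2 C with
   rho = 1 - (1 - beta^n) eps once eps is small, and the geometric recursion
   gives the bound. *)

Lemma lsum_cons a l : lsum (a :: l) = a + lsum l.
Proof. reflexivity. Qed.

Lemma lsum_app l1 l2 : lsum (l1 ++ l2) = lsum l1 + lsum l2.
Proof. induction l1; cbn [app]; rewrite ?lsum_cons; [simpl; ring | rewrite IHl1; ring]. Qed.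

Lemma lsum_map_plus {A} (f g : A -> R) l :
  lsum (map (fun x => f x + g x) l) = lsum (map f l) + lsum (map g l).
Proof. induction l; cbn [map]; rewrite ?lsum_cons; [simpl; ring | rewrite IHl; ring]. Qed.

Lemma lsum_map_scal {A} (f : A -> R) c l :
  lsum (map (fun x => c * f x) l) = c * lsum (map f l).
Proof. induction l; cbn [map]; rewrite ?lsum_cons; [simpl; ring | rewrite IHl; ring]. Qed.

Lemma lsum_map_0 {A} (l : list A) : lsum (map (fun _ => 0) l) = 0.
Proof. induction l; cbn [map]; rewrite ?lsum_cons; [reflexivity | rewrite IHl; ring]. Qed.

Lemma lsum_map_ext_in {A} (f g : A -> R) l :
  (forall x, In x l -> f x = g x) -> lsum (map f l) = lsum (map g l).
Proof. intro H; rewrite (map_ext_in _ _ _ H); reflexivity. Qed.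

Lemma lsum_map_le {A} (f g : A -> R) l :
  (forall x, In x l -> f x <= g x) -> lsum (map f l) <= lsum (map g l).
Proof.
  induction l; cbn [map]; intro H; rewrite ?lsum_cons; [simpl; lra |].
  apply Rplus_le_compat; auto with datatypes.
Qed.

Lemma lsum_flat_map {A B} (F : B -> R) (g : A -> list B) l :
  lsum (map F (flat_map g l)) = lsum (map (fun x => lsum (map F (g x))) l).
Proof.
  induction l; cbn [map flat_map]; [reflexivity |].
  rewrite map_app, lsum_app, lsum_cons, IHl; reflexivity.
Qed.

Lemma lsum_list_prod {A B} (H : A * B -> R) la lb :
  lsum (map H (list_prod la lb)) = lsum (map (fun a => lsum (map (fun b => H (a, b)) lb)) la).
Proof.
  induction la; cbn [map list_prod]; [reflexivity |].
  rewrite map_app, lsum_app, lsum_cons, IHla, map_map; reflexivity.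
Qed.

Lemma lsum_map_swap {A B} (f : A -> B -> R) la lb :
  lsum (map (fun i => lsum (map (fun j => f i j) lb)) la)
  = lsum (map (fun j => lsum (map (fun i => f i j) la)) lb).
Proof.
  induction la; cbn [map].
  - rewrite lsum_map_0; reflexivity.
  - rewrite lsum_cons, IHla, <- lsum_map_plus; reflexivity.
Qed.

Lemma fsum_ext_lt m f g : (forall i, (i < m)%nat -> f i = g i) -> fsum m f = fsum m g.
Proof. intro H; apply lsum_map_ext_in; intros x Hx; apply in_seq in Hx; apply H; lia. Qed.

Lemma fsum_le_lt m f g : (forall i, (i < m)%nat -> f i <= g i) -> fsum m f <= fsum m g.
Proof. intro H; apply lsum_map_le; intros x Hx; apply in_seq in Hx; apply H; lia. Qed.

Lemma fsum_plus m f g : fsum m (fun i => f i + g i) = fsum m f + fsum m g.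
Proof. apply lsum_map_plus. Qed.

Lemma fsum_scal m f c : fsum m (fun i => c * f i) = c * fsum m f.
Proof. apply lsum_map_scal. Qed.

Lemma fsum_swap m k (f : nat -> nat -> R) :
  fsum m (fun i => fsum k (fun j => f i j)) = fsum k (fun j => fsum m (fun i => f i j)).
Proof. apply lsum_map_swap. Qed.

Lemma in_allseqs {X} m (xs : list X) l :
  In l (allseqs m xs) -> length l = m /\ Forall (fun x => In x xs) l.
Proof.
  revert l; induction m; intros l H; simpl in H.
  - destruct H as [<- | []]; split; auto.
  - apply in_flat_map in H as [x [Hx H]]; apply in_map_iff in H as [t [<- Ht]].
    destruct (IHm t Ht); simpl; split; auto.
Qed.

Lemma Un_cv_const c : Un_cv (fun _ => c) c.
Proof. intros e He; exists 0%nat; intros; unfold R_dist; rewrite Rminus_diag, Rabs_R0; auto. Qed.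

Lemma Un_cv_affine u l a b : Un_cv u l -> Un_cv (fun N => a + b * u N) (a + b * l).
Proof. intro H; apply CV_plus; [apply Un_cv_const | apply CV_mult; [apply Un_cv_const | exact H]]. Qed.

Lemma Un_cv_lsum {A} (l : list A) (f : nat -> A -> R) g :
  (forall x, In x l -> Un_cv (fun N => f N x) (g x)) ->
  Un_cv (fun N => lsum (map (f N) l)) (lsum (map g l)).
Proof.
  induction l; intro H; cbn [map]; [apply Un_cv_const |].
  apply (CV_plus (fun N => f N a) (fun N => lsum (map (f N) l))); auto with datatypes.
Qed.

Lemma td_contraction_factor_le bn eps :
  0 <= bn < 1 -> 0 < eps -> 16 * (1 + bn ^ 2) * eps <= 1 - bn ->
  (1 - eps + eps * bn) ^ 2 + 4 * eps ^ 2 * bn ^ 2 <= 1 - (1 - bn) * eps.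
Proof.
  intros Hbn Heps Hsmall.
  set (rho := 1 - (1 - bn) * eps).
  replace (1 - eps + eps * bn) with rho by (unfold rho; ring).
  (* rho^2 + 4 eps^2 bn^2 <= rho  iff  4 eps bn^2 <= rho (1 - bn), and rho >= 15/16 *)
  assert (Hrho : 15 / 16 <= rho) by (unfold rho; nra).
  assert (4 * eps * bn ^ 2 <= rho * (1 - bn)) by nra.
  assert (eps * (4 * eps * bn ^ 2) <= eps * (rho * (1 - bn))) by (apply Rmult_le_compat_l; lra).
  unfold rho in *; nra.
Qed.

Section TD.

Variables (nS nA : nat) (P : nat -> nat -> nat -> R) (pi : nat -> nat -> R)
  (Rw : nat -> nat -> R) (beta : R).
Hypothesis HP0 : forall a s s', (a < nA)%nat -> (s < nS)%nat -> (s' < nS)%nat -> 0 <= P a s s'.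
Hypothesis HP1 : forall a s, (a < nA)%nat -> (s < nS)%nat -> fsum nS (fun s' => P a s s') = 1.
Hypothesis HR : forall s a, (s < nS)%nat -> (a < nA)%nat -> 0 <= Rw s a <= 1.
Hypothesis Hbeta : 0 < beta < 1.
Hypothesis Hpi0 : forall s a, (s < nS)%nat -> (a < nA)%nat -> 0 <= pi s a.
Hypothesis Hpi1 : forall s, (s < nS)%nat -> fsum nA (fun a => pi s a) = 1.

Definition Etraj (n s : nat) (h : traj -> R) : R :=
  lsum (map (fun tr => traj_prob P pi s tr * h tr) (trajs nS nA n)).

Definition step_ok (p : nat * nat) : Prop := (fst p < nA)%nat /\ (snd p < nS)%nat.

Fixpoint traj_end (s : nat) (tr : traj) : nat :=
  match tr with [] => s | (_, s') :: tr' => traj_end s' tr' end.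

Lemma in_trajs n tr : In tr (trajs nS nA n) -> length tr = n /\ Forall step_ok tr.
Proof.
  intro H; apply in_allseqs in H as [Hl Hf]; split; auto.
  eapply Forall_impl; [| exact Hf]; intros [a s'] Hin.
  apply in_prod_iff in Hin as [Ha Hs]; apply in_seq in Ha; apply in_seq in Hs.
  unfold step_ok; simpl; lia.
Qed.

Lemma traj_prob_ge0 s tr : (s < nS)%nat -> Forall step_ok tr -> 0 <= traj_prob P pi s tr.
Proof.
  revert s; induction tr as [| [a s'] tr IH]; intros s Hs Hf; simpl; [lra |].
  inversion Hf as [| ? ? [Ha Hs'] Hf']; subst; simpl in *.
  apply Rmult_le_pos; [apply Rmult_le_pos |]; auto.
Qed.

Lemma traj_end_lt s tr : (s < nS)%nat -> Forall step_ok tr -> (traj_end s tr < nS)%nat.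
Proof.
  revert s; induction tr as [| [a s'] tr IH]; intros s Hs Hf; simpl; auto.
  inversion Hf as [| ? ? [Ha Hs'] Hf']; subst; simpl in *; auto.
Qed.

Lemma Etraj_ext n s h h' : (forall tr, h tr = h' tr) -> Etraj n s h = Etraj n s h'.
Proof. intro H; unfold Etraj; f_equal; apply map_ext; intro; rewrite H; auto. Qed.

Lemma Etraj_ext_in n s h h' :
  (forall tr, length tr = n -> Forall step_ok tr -> h tr = h' tr) -> Etraj n s h = Etraj n s h'.
Proof.
  intro H; apply lsum_map_ext_in; intros tr Htr.
  apply in_trajs in Htr as [Hl Hf]; rewrite H; auto.
Qed.

Lemma Etraj_le n s h h' : (s < nS)%nat ->
  (forall tr, length tr = n -> Forall step_ok tr -> h tr <= h' tr) -> Etraj n s h <= Etraj n s h'.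
Proof.
  intros Hs H; apply lsum_map_le; intros tr Htr.
  apply in_trajs in Htr as [Hl Hf]; apply Rmult_le_compat_l; auto using traj_prob_ge0.
Qed.

Lemma Etraj_plus n s f g : Etraj n s (fun tr => f tr + g tr) = Etraj n s f + Etraj n s g.
Proof. unfold Etraj; rewrite <- lsum_map_plus; f_equal; apply map_ext; intro; ring. Qed.

Lemma Etraj_scal n s f c : Etraj n s (fun tr => c * f tr) = c * Etraj n s f.
Proof. unfold Etraj; rewrite <- lsum_map_scal; f_equal; apply map_ext; intro; ring. Qed.

Lemma Etraj_0 s h : Etraj 0 s h = h [].
Proof. unfold Etraj, trajs; simpl allseqs; cbn [map traj_prob]; rewrite lsum_cons; simpl; ring. Qed.

Lemma Etraj_S n s h : Etraj (S n) s h =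
  fsum nA (fun a => fsum nS (fun s' =>
    pi s a * P a s s' * Etraj n s' (fun tr => h ((a, s') :: tr)))).
Proof.
  unfold Etraj at 1.
  change (trajs nS nA (S n)) with
    (flat_map (fun x => map (cons x) (trajs nS nA n)) (list_prod (seq 0 nA) (seq 0 nS))).
  rewrite lsum_flat_map, lsum_list_prod.
  change (fsum nA ?F) with (lsum (map F (seq 0 nA))); f_equal; apply map_ext; intro a.
  change (fsum nS ?F) with (lsum (map F (seq 0 nS))); f_equal; apply map_ext; intro s'.
  rewrite map_map; unfold Etraj; rewrite <- lsum_map_scal; f_equal; apply map_ext; intro tr.
  simpl; ring.
Qed.

Lemma Etraj_const n s c : (s < nS)%nat -> Etraj n s (fun _ => c) = c.
Proof.
  revert s; induction n; intros s Hs; [apply Etraj_0 |].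
  rewrite Etraj_S.
  transitivity (c * fsum nA (fun a => pi s a)); [| rewrite Hpi1; auto; ring].
  rewrite <- fsum_scal; apply fsum_ext_lt; intros a Ha.
  rewrite <- (Rmult_1_r (c * pi s a)), <- (HP1 a s Ha Hs), <- fsum_scal.
  apply fsum_ext_lt; intros s' Hs'; rewrite IHn; auto; ring.
Qed.

Lemma Etraj_sq_mean_le n s f : (s < nS)%nat ->
  Etraj n s f ^ 2 <= Etraj n s (fun tr => f tr ^ 2).
Proof.
  intro Hs; set (m := Etraj n s f).
  assert (Hvar : 0 <= Etraj n s (fun tr => (f tr - m) ^ 2)).
  { rewrite <- (Etraj_const n s 0) by exact Hs; apply Etraj_le; auto using pow2_ge_0. }
  rewrite (Etraj_ext n s _ (fun tr => f tr ^ 2 + ((-2 * m) * f tr + m ^ 2))) in Hvar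
    by (intro; ring).
  rewrite !Etraj_plus, Etraj_scal, Etraj_const in Hvar by exact Hs; fold m in Hvar; nra.
Qed.

Lemma Etraj_affine_sq_le n s a c f : (s < nS)%nat ->
  Etraj n s (fun tr => (a + c * f tr) ^ 2)
  <= (a + c * Etraj n s f) ^ 2 + c ^ 2 * Etraj n s (fun tr => f tr ^ 2).
Proof.
  intro Hs.
  rewrite (Etraj_ext n s _ (fun tr => a ^ 2 + ((2 * a * c) * f tr + c ^ 2 * f tr ^ 2)))
    by (intro; ring).
  rewrite !Etraj_plus, !Etraj_scal, Etraj_const by exact Hs.
  pose proof (pow2_ge_0 (c * Etraj n s f)); nra.
Qed.

Lemma Etraj_stationary (lam : nat -> R)
  (Hstat : forall s', (s' < nS)%nat -> lam s' = fsum nS (fun s => lam s * Ppi nA P pi s s'))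
  n g :
  fsum nS (fun s => lam s * Etraj n s (fun tr => g (traj_end s tr))) = fsum nS (fun s => lam s * g s).
Proof.
  induction n; [apply fsum_ext_lt; intros s _; rewrite Etraj_0; reflexivity |].
  rewrite <- IHn.
  set (E := fun s' => Etraj n s' (fun tr => g (traj_end s' tr))).
  transitivity (fsum nS (fun s => fsum nS (fun s' =>
                  fsum nA (fun a => lam s * (pi s a * P a s s') * E s')))).
  - apply fsum_ext_lt; intros s Hs; rewrite Etraj_S, <- fsum_scal, <- fsum_swap.
    apply fsum_ext_lt; intros a Ha; rewrite <- fsum_scal.
    apply fsum_ext_lt; intros s' Hs'; unfold E; cbn [traj_end]; ring.
  - rewrite fsum_swap; apply fsum_ext_lt; intros s' Hs'.
    rewrite (Hstat s' Hs'), Rmult_comm, <- fsum_scal.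
    apply fsum_ext_lt; intros s Hs; unfold Ppi; rewrite <- !fsum_scal.
    apply fsum_ext_lt; intros a Ha; unfold E; ring.
Qed.

Lemma traj_ret_split V s tr :
  traj_ret Rw beta V s tr
  = traj_ret Rw beta (fun _ => 0) s tr + beta ^ length tr * V (traj_end s tr).
Proof. revert s; induction tr as [| [a s'] tr IH]; intro s; simpl; [ring | rewrite IH; ring]. Qed.

Lemma reward_sum_bounds s tr : (s < nS)%nat -> Forall step_ok tr ->
  0 <= traj_ret Rw beta (fun _ => 0) s tr <= (1 - beta ^ length tr) / (1 - beta).
Proof.
  revert s; induction tr as [| [a s'] tr IH]; intros s Hs Hf; simpl.
  - replace ((1 - 1) / (1 - beta)) with 0 by (field; lra); lra.
  - inversion Hf as [| ? ? [Ha Hs'] Hf']; subst; simpl in *.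
    destruct (IH s' Hs' Hf') as [I1 I2]; destruct (HR s a Hs Ha) as [R1 R2].
    replace ((1 - beta * beta ^ length tr) / (1 - beta))
      with (1 + beta * ((1 - beta ^ length tr) / (1 - beta))) by (field; lra).
    split; nra.
Qed.

Lemma vN_add n N s : (s < nS)%nat ->
  vN nS nA P pi Rw beta (n + N) s
  = Etraj n s (traj_ret Rw beta (vN nS nA P pi Rw beta N) s).
Proof.
  revert s; induction n; intros s Hs; [rewrite Etraj_0; reflexivity |].
  change (vN nS nA P pi Rw beta (S n + N) s)
    with (Etraj (S (n + N)) s (traj_ret Rw beta (fun _ => 0) s)).
  rewrite !Etraj_S; apply fsum_ext_lt; intros a Ha; apply fsum_ext_lt; intros s' Hs'.
  cbn [traj_ret]; rewrite !Etraj_plus, !Etraj_scal, !Etraj_const by auto.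
  rewrite <- IHn by auto; reflexivity.
Qed.

Lemma Vpi_bellman Vpi
  (HVpi : forall s, (s < nS)%nat -> Un_cv (fun N => vN nS nA P pi Rw beta N s) (Vpi s))
  n s : (s < nS)%nat -> Vpi s = Etraj n s (traj_ret Rw beta Vpi s).
Proof.
  intro Hs; apply (UL_sequence (fun N => vN nS nA P pi Rw beta (n + N) s)).
  - apply (Un_cv_ext (fun N => vN nS nA P pi Rw beta (N + n) s));
      [intro; rewrite Nat.add_comm; reflexivity | exact (CV_shift' _ n _ (HVpi s Hs))].
  - apply (Un_cv_ext (fun N => Etraj n s (traj_ret Rw beta (vN nS nA P pi Rw beta N) s)));
      [intro; rewrite vN_add; auto |].
    apply Un_cv_lsum; intros tr Htr; apply in_trajs in Htr as [_ Hf].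
    set (p := traj_prob P pi s tr); set (r := traj_ret Rw beta (fun _ => 0) s tr).
    apply (Un_cv_ext (fun N => p * r + p * beta ^ length tr
                                  * vN nS nA P pi Rw beta N (traj_end s tr)));
      [intro N; rewrite (traj_ret_split (vN nS nA P pi Rw beta N)); unfold r; ring |].
    replace (p * traj_ret Rw beta Vpi s tr)
      with (p * r + p * beta ^ length tr * Vpi (traj_end s tr))
      by (rewrite (traj_ret_split Vpi); unfold r; ring).
    apply Un_cv_affine, HVpi, traj_end_lt; auto.
Qed.

(* Expectation over independent trajectories from the states o, ..., o + m - 1;
   one TD(n) iteration is the case o = 0, m = nS. *)
Definition joint_prob_from (o m : nat) (w : list traj) : R :=
  fold_right Rmult 1 (map (fun i => traj_prob P pi (o + i) (nth i w [])) (seq 0 m)).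

Definition Ejoint (n o m : nat) (H : list traj -> R) : R :=
  lsum (map (fun w => joint_prob_from o m w * H w) (allseqs m (trajs nS nA n))).

Lemma joint_prob_from_cons o m t w :
  joint_prob_from o (S m) (t :: w) = traj_prob P pi o t * joint_prob_from (S o) m w.
Proof.
  unfold joint_prob_from; cbn [seq map fold_right]; rewrite <- seq_shift, map_map, Nat.add_0_r.
  do 2 f_equal; apply map_ext; intro i; rewrite Nat.add_succ_r; reflexivity.
Qed.

Lemma Ejoint_0 n o H : Ejoint n o 0 H = H [].
Proof. unfold Ejoint; simpl allseqs; cbn [map]; rewrite lsum_cons; unfold joint_prob_from; simpl; ring. Qed.

Lemma Ejoint_S n o m H :
  Ejoint n o (S m) H = Etraj n o (fun t => Ejoint n (S o) m (fun w => H (t :: w))).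
Proof.
  unfold Ejoint at 1.
  change (allseqs (S m) (trajs nS nA n))
    with (flat_map (fun x => map (cons x) (allseqs m (trajs nS nA n))) (trajs nS nA n)).
  rewrite lsum_flat_map; unfold Etraj; f_equal; apply map_ext; intro t.
  rewrite map_map; unfold Ejoint; rewrite <- lsum_map_scal; f_equal; apply map_ext; intro w.
  rewrite joint_prob_from_cons; ring.
Qed.

Lemma Ejoint_ext n o m F G : (forall w, F w = G w) -> Ejoint n o m F = Ejoint n o m G.
Proof. intro E; unfold Ejoint; f_equal; apply map_ext; intro; rewrite E; auto. Qed.

Lemma Ejoint_plus n o m F G : Ejoint n o m (fun w => F w + G w) = Ejoint n o m F + Ejoint n o m G.
Proof. unfold Ejoint; rewrite <- lsum_map_plus; f_equal; apply map_ext; intro; ring. Qed.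

Lemma Ejoint_scal n o m F c : Ejoint n o m (fun w => c * F w) = c * Ejoint n o m F.
Proof. unfold Ejoint; rewrite <- lsum_map_scal; f_equal; apply map_ext; intro; ring. Qed.

Lemma Ejoint_fsum n o m k (F : nat -> list traj -> R) :
  Ejoint n o m (fun w => fsum k (fun s => F s w)) = fsum k (fun s => Ejoint n o m (F s)).
Proof.
  unfold fsum, lsum; induction (seq 0 k) as [| i l IH]; cbn [map fold_right].
  - rewrite (Ejoint_ext n o m _ (fun _ => 0 * 0)) by (intro; ring).
    rewrite Ejoint_scal; ring.
  - rewrite Ejoint_plus, IH; reflexivity.
Qed.

Lemma Ejoint_le n m : forall o F G, (o + m <= nS)%nat ->
  (forall w, F w <= G w) -> Ejoint n o m F <= Ejoint n o m G.
Proof.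
  induction m; intros o F G Ho H; [rewrite !Ejoint_0; auto |].
  rewrite !Ejoint_S; apply Etraj_le; [lia |]; intros; apply IHm; auto; lia.
Qed.

Lemma Ejoint_const n m : forall o c, (o + m <= nS)%nat -> Ejoint n o m (fun _ => c) = c.
Proof.
  induction m; intros o c Ho; [apply Ejoint_0 |].
  rewrite Ejoint_S, (Etraj_ext n o _ (fun _ => c)) by (intro; apply IHm; lia).
  apply Etraj_const; lia.
Qed.

Lemma Ejoint_nth n m : forall o j q, (o + m <= nS)%nat -> (j < m)%nat ->
  Ejoint n o m (fun w => q (nth j w [])) = Etraj n (o + j) q.
Proof.
  induction m; intros o j q Ho Hj; [lia |].
  rewrite Ejoint_S; destruct j as [| j].
  - rewrite Nat.add_0_r; apply Etraj_ext; intro t; cbn [nth]; apply Ejoint_const; lia.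
  - rewrite (Etraj_ext n o _ (fun _ => Etraj n (S o + j) q)) by (intro; cbn [nth]; apply IHm; lia).
    rewrite Etraj_const by lia; f_equal; lia.
Qed.

Lemma ExpTD_S n eps k g V :
  ExpTD nS nA n P pi Rw beta eps (S k) g V
  = Ejoint n 0 nS (fun w => ExpTD nS nA n P pi Rw beta eps k g (td_update Rw beta eps V w)).
Proof. reflexivity. Qed.

Lemma ExpTD_le_geometric n eps (g : (nat -> R) -> R) rho D :
  0 <= rho ->
  (forall V, Ejoint n 0 nS (fun w => g (td_update Rw beta eps V w)) <= rho * g V + (1 - rho) * D) ->
  forall k V, ExpTD nS nA n P pi Rw beta eps k g V <= rho ^ k * g V + (1 - rho ^ k) * D.
Proof.
  intros Hrho Hstep k; induction k as [| k IH]; intro V; [simpl; lra |].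
  rewrite ExpTD_S.
  eapply Rle_trans; [apply (Ejoint_le n nS 0 _ (fun w =>
      rho ^ k * g (td_update Rw beta eps V w) + (1 - rho ^ k) * D)); [lia | intro; apply IH] |].
  rewrite Ejoint_plus, Ejoint_scal, Ejoint_const by lia.
  assert (Hk : 0 <= rho ^ k) by (apply pow_le; exact Hrho).
  pose proof (Rmult_le_compat_l _ _ _ Hk (Hstep V)); simpl; nra.
Qed.

Section Error.

Variables (Vpi lam : nat -> R) (n : nat) (eps : R).
Hypothesis HVpi : forall s, (s < nS)%nat -> Un_cv (fun N => vN nS nA P pi Rw beta N s) (Vpi s).
Hypothesis Hlam_pos : forall s, (s < nS)%nat -> 0 < lam s.
Hypothesis Hlam_sum : fsum nS lam = 1.
Hypothesis Hlam_stat : forall s', (s' < nS)%nat ->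
  lam s' = fsum nS (fun s => lam s * Ppi nA P pi s s').
Hypothesis Heps0 : 0 < eps.
Hypothesis Heps1 : eps <= 1.

Lemma normL2_ge0 V : 0 <= normL2 nS lam V.
Proof.
  apply Rle_trans with (fsum nS (fun _ => 0)); [right; symmetry; apply lsum_map_0 |].
  apply fsum_le_lt; intros s Hs; apply Rmult_le_pos; [apply Rlt_le, Hlam_pos; auto | apply pow2_ge_0].
Qed.

Lemma td_return_mean V s : (s < nS)%nat ->
  Etraj n s (traj_ret Rw beta V s)
  = Vpi s + beta ^ n * Etraj n s (fun tr => V (traj_end s tr) - Vpi (traj_end s tr)).
Proof.
  intro Hs; rewrite (Vpi_bellman Vpi HVpi n s Hs).
  set (r := fun tr => traj_ret Rw beta (fun _ => 0) s tr).
  assert (Hsplit : forall W, Etraj n s (traj_ret Rw beta W s)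
                            = Etraj n s (fun tr => r tr + beta ^ n * W (traj_end s tr))).
  { intro W; apply Etraj_ext_in; intros tr Hl _; rewrite traj_ret_split, Hl; reflexivity. }
  rewrite !Hsplit, (Etraj_ext n s (fun tr => V (traj_end s tr) - Vpi (traj_end s tr))
                    (fun tr => V (traj_end s tr) + (-1) * Vpi (traj_end s tr))) by (intro; ring).
  rewrite !Etraj_plus, !Etraj_scal; ring.
Qed.

Lemma td_return_sq_le V s tr : (s < nS)%nat -> length tr = n -> Forall step_ok tr ->
  let X := V (traj_end s tr) in let Y := Vpi (traj_end s tr) in
  traj_ret Rw beta V s tr ^ 2
  <= 2 * ((1 - beta ^ n) / (1 - beta)) ^ 2 + 4 * (beta ^ n) ^ 2 * Y ^ 2
     + 4 * (beta ^ n) ^ 2 * (X - Y) ^ 2.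
Proof.
  intros Hs Hl Hf X Y; rewrite traj_ret_split, Hl; fold X.
  pose proof (reward_sum_bounds s tr Hs Hf) as Hr; rewrite Hl in Hr.
  set (r := traj_ret Rw beta (fun _ => 0) s tr) in *.
  set (bn := beta ^ n) in *; set (K := (1 - bn) / (1 - beta)) in *.
  assert (r ^ 2 <= K ^ 2) by nra.
  assert ((r + bn * X) ^ 2 <= 2 * r ^ 2 + 2 * bn ^ 2 * X ^ 2)
    by (pose proof (pow2_ge_0 (r - bn * X)); nra).
  assert (bn ^ 2 * X ^ 2 <= bn ^ 2 * (2 * Y ^ 2 + 2 * (X - Y) ^ 2))
    by (apply Rmult_le_compat_l; [apply pow2_ge_0 | pose proof (pow2_ge_0 (2 * Y - X)); nra]).
  lra.
Qed.

Lemma convex_comb_sq_le e M bn : 0 <= bn ->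
  ((1 - eps) * e + eps * bn * M) ^ 2
  <= ((1 - eps) ^ 2 + (1 - eps) * eps * bn) * e ^ 2
     + ((1 - eps) * eps * bn + eps ^ 2 * bn ^ 2) * M ^ 2.
Proof.
  intro Hbn.
  assert (Hc : 0 <= (1 - eps) * eps * bn) by (apply Rmult_le_pos; [apply Rmult_le_pos |]; lra).
  assert ((1 - eps) * eps * bn * (2 * e * M) <= (1 - eps) * eps * bn * (e ^ 2 + M ^ 2))
    by (apply Rmult_le_compat_l; [exact Hc | pose proof (pow2_ge_0 (e - M)); nra]).
  nra.
Qed.

Lemma td_state_error_le V s : (s < nS)%nat ->
  let E2 := Etraj n s (fun tr => (V (traj_end s tr) - Vpi (traj_end s tr)) ^ 2) in
  let EV := Etraj n s (fun tr => Vpi (traj_end s tr) ^ 2) in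
  Etraj n s (fun tr => (V s + eps * (traj_ret Rw beta V s tr - V s) - Vpi s) ^ 2)
  <= ((1 - eps) ^ 2 + (1 - eps) * eps * beta ^ n) * (V s - Vpi s) ^ 2
     + ((1 - eps) * eps * beta ^ n + 5 * eps ^ 2 * (beta ^ n) ^ 2) * E2
     + eps ^ 2 * (2 * ((1 - beta ^ n) / (1 - beta)) ^ 2 + 4 * (beta ^ n) ^ 2 * EV).
Proof.
  intros Hs E2 EV.
  set (bn := beta ^ n); set (K := (1 - bn) / (1 - beta)).
  set (G := traj_ret Rw beta V s).
  set (M := Etraj n s (fun tr => V (traj_end s tr) - Vpi (traj_end s tr))).
  assert (Hbn : 0 <= bn) by (apply pow_le; lra).
  assert (HG2 : Etraj n s (fun tr => G tr ^ 2) <= 2 * K ^ 2 + 4 * bn ^ 2 * EV + 4 * bn ^ 2 * E2).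
  { apply Rle_trans with (Etraj n s (fun tr => 2 * K ^ 2 + (4 * bn ^ 2 * Vpi (traj_end s tr) ^ 2
          + 4 * bn ^ 2 * (V (traj_end s tr) - Vpi (traj_end s tr)) ^ 2))).
    - apply Etraj_le; [exact Hs |]; intros tr Hl Hf.
      pose proof (td_return_sq_le V s tr Hs Hl Hf) as Htr; cbv zeta in Htr; unfold G, K, bn; lra.
    - rewrite !Etraj_plus, Etraj_const, !Etraj_scal by exact Hs; right; unfold EV, E2; ring. }
  (* the new error is ((1 - eps) V s - Vpi s) + eps G, whose mean part is
     (1 - eps) e + eps bn M by the Bellman equation *)
  eapply Rle_trans.
  { rewrite (Etraj_ext n s _ (fun tr => ((1 - eps) * V s - Vpi s + eps * G tr) ^ 2))
      by (intro; unfold G; ring).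
    apply Etraj_affine_sq_le; exact Hs. }
  unfold G at 1; rewrite (td_return_mean V s Hs); fold bn M.
  replace ((1 - eps) * V s - Vpi s + eps * (Vpi s + bn * M))
    with ((1 - eps) * (V s - Vpi s) + eps * bn * M) by ring.
  pose proof (convex_comb_sq_le (V s - Vpi s) M bn Hbn).
  pose proof (Etraj_sq_mean_le n s _ Hs : M ^ 2 <= E2) as HM.
  assert (eps ^ 2 * Etraj n s (fun tr => G tr ^ 2)
          <= eps ^ 2 * (2 * K ^ 2 + 4 * bn ^ 2 * EV + 4 * bn ^ 2 * E2))
    by (apply Rmult_le_compat_l; [apply pow2_ge_0 | exact HG2]).
  assert (Hc : 0 <= (1 - eps) * eps * bn + eps ^ 2 * bn ^ 2)
    by (apply Rplus_le_le_0_compat;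
        [apply Rmult_le_pos; [apply Rmult_le_pos |]; lra | apply Rmult_le_pos; apply pow2_ge_0]).
  pose proof (Rmult_le_compat_l _ _ _ Hc HM).
  lra.
Qed.

Lemma td_step_error_le V :
  Ejoint n 0 nS (fun w => normL2 nS lam (fun s => td_update Rw beta eps V w s - Vpi s))
  <= ((1 - eps + eps * beta ^ n) ^ 2 + 4 * eps ^ 2 * (beta ^ n) ^ 2)
       * normL2 nS lam (fun s => V s - Vpi s)
     + eps ^ 2 * (2 * ((1 - beta ^ n) / (1 - beta)) ^ 2 + 4 * (beta ^ n) ^ 2 * normL2 nS lam Vpi).
Proof.
  set (q := fun s tr => (V s + eps * (traj_ret Rw beta V s tr - V s) - Vpi s) ^ 2).
  set (E2 := fun s => Etraj n s (fun tr => (V (traj_end s tr) - Vpi (traj_end s tr)) ^ 2)).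
  set (EV := fun s => Etraj n s (fun tr => Vpi (traj_end s tr) ^ 2)).
  set (bn := beta ^ n); set (K := (1 - bn) / (1 - beta)).
  apply Rle_trans with (fsum nS (fun s => lam s * Etraj n s (q s))).
  { right; unfold normL2.
    rewrite (Ejoint_fsum n 0 nS nS (fun s w => lam s * (td_update Rw beta eps V w s - Vpi s) ^ 2)).
    apply fsum_ext_lt; intros s Hs; rewrite Ejoint_scal; f_equal.
    apply (Ejoint_nth n nS 0 s (q s)); lia. }
  apply Rle_trans with (fsum nS (fun s =>
      ((1 - eps) ^ 2 + (1 - eps) * eps * bn) * (lam s * (V s - Vpi s) ^ 2)
      + (((1 - eps) * eps * bn + 5 * eps ^ 2 * bn ^ 2) * (lam s * E2 s)
      + ((eps ^ 2 * 2 * K ^ 2) * lam s + (eps ^ 2 * 4 * bn ^ 2) * (lam s * EV s))))).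
  { apply fsum_le_lt; intros s Hs.
    eapply Rle_trans; [apply Rmult_le_compat_l;
      [apply Rlt_le, Hlam_pos, Hs | apply td_state_error_le, Hs] |].
    right; unfold E2, EV, K, bn; ring. }
  rewrite !fsum_plus, !fsum_scal.
  assert (HE2 : fsum nS (fun s => lam s * E2 s) = normL2 nS lam (fun s => V s - Vpi s))
    by exact (Etraj_stationary lam Hlam_stat n (fun s' => (V s' - Vpi s') ^ 2)).
  assert (HEV : fsum nS (fun s => lam s * EV s) = normL2 nS lam Vpi)
    by exact (Etraj_stationary lam Hlam_stat n (fun s' => Vpi s' ^ 2)).
  rewrite HE2, HEV, Hlam_sum.
  unfold normL2; right; ring.
Qed.

Lemma td_mse_le (Hsmall : 16 * (1 + (beta ^ n) ^ 2) * eps <= 1 - beta ^ n) k V0 :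
  ExpTD nS nA n P pi Rw beta eps k (fun V => normL2 nS lam (fun s => V s - Vpi s)) V0
  <= normL2 nS lam (fun s => V0 s - Vpi s) * (1 - (1 - beta ^ n) * eps) ^ k
     + 8 / (1 - beta ^ n)
       * ((1 - beta ^ n) ^ 2 / (1 - beta) ^ 2 + 2 * (beta ^ n) ^ 2 * normL2 nS lam Vpi) * eps.
Proof.
  assert (Hbn : 0 <= beta ^ n < 1) by (split; [apply pow_le; lra | nra]).
  set (bn := beta ^ n) in *; set (N2 := normL2 nS lam Vpi).
  set (rho := 1 - (1 - bn) * eps).
  (* (1 - rho) D is the noise term of td_step_error_le, so D is the fixed point of
     the recursion; the stated constant is 4 D *)
  set (D := (2 * ((1 - bn) / (1 - beta)) ^ 2 + 4 * bn ^ 2 * N2) * eps / (1 - bn)).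
  assert (HD : 0 <= D).
  { assert (0 <= N2) by apply normL2_ge0.
    unfold D; apply Rmult_le_pos; [apply Rmult_le_pos; [| lra] | apply Rlt_le, Rinv_0_lt_compat; lra].
    pose proof (pow2_ge_0 ((1 - bn) / (1 - beta))); pose proof (pow2_ge_0 bn); nra. }
  pose proof (td_contraction_factor_le bn eps Hbn Heps0 Hsmall) as Hrho.
  assert (Hstep : forall V,
    Ejoint n 0 nS (fun w => normL2 nS lam (fun s => td_update Rw beta eps V w s - Vpi s))
    <= rho * normL2 nS lam (fun s => V s - Vpi s) + (1 - rho) * D).
  { intro V; eapply Rle_trans; [apply td_step_error_le |].
    pose proof (normL2_ge0 (fun s => V s - Vpi s)).
    replace ((1 - rho) * D) with (eps ^ 2 * (2 * ((1 - bn) / (1 - beta)) ^ 2 + 4 * bn ^ 2 * N2))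
      by (unfold rho, D; field; lra).
    apply Rplus_le_compat_r, Rmult_le_compat_r; assumption. }
  pose proof (ExpTD_le_geometric n eps _ rho D ltac:(unfold rho; nra) Hstep k V0).
  replace (8 / (1 - bn) * ((1 - bn) ^ 2 / (1 - beta) ^ 2 + 2 * bn ^ 2 * N2) * eps) with (4 * D)
    by (unfold D; field; lra).
  assert (0 <= rho ^ k) by (apply pow_le; unfold rho; nra).
  nra.
Qed.

End Error.

End TD.

Theorem theorem4
  (nS nA : nat) (P : nat -> nat -> nat -> R) (Rw : nat -> nat -> R)
  (beta : R) (pi : nat -> nat -> R) (lam : nat -> R) (Vpi : nat -> R)
  (n : nat) (eps : R) (V0 : nat -> R)
  (HnS : (0 < nS)%nat) (HnA : (0 < nA)%nat)
  (HP0 : forall a s s', (a < nA)%nat -> (s < nS)%nat -> (s' < nS)%nat -> 0 <= P a s s')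
  (HP1 : forall a s, (a < nA)%nat -> (s < nS)%nat -> fsum nS (fun s' => P a s s') = 1)
  (HR : forall s a, (s < nS)%nat -> (a < nA)%nat -> 0 <= Rw s a <= 1)
  (Hbeta : 0 < beta < 1)
  (Hpi0 : forall s a, (s < nS)%nat -> (a < nA)%nat -> 0 <= pi s a)
  (Hpi1 : forall s, (s < nS)%nat -> fsum nA (fun a => pi s a) = 1)
  (Hlam_pos : forall s, (s < nS)%nat -> 0 < lam s)
  (Hlam_sum : fsum nS lam = 1)
  (Hlam_stat : forall s', (s' < nS)%nat ->
      lam s' = fsum nS (fun s => lam s * Ppi nA P pi s s'))
  (Hlam_uniq : forall mu : nat -> R,
      (forall s, (s < nS)%nat -> 0 <= mu s) -> fsum nS mu = 1 ->
      (forall s', (s' < nS)%nat -> mu s' = fsum nS (fun s => mu s * Ppi nA P pi s s')) ->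
      forall s, (s < nS)%nat -> mu s = lam s)
  (HVpi : forall s, (s < nS)%nat -> Un_cv (fun N => vN nS nA P pi Rw beta N s) (Vpi s))
  (Hn : (1 <= n)%nat)
  (Heps0 : 0 < eps)
  (Heps : eps <= (1 - beta ^ n) / (16 * (1 + beta ^ (2 * n)))) :
  forall k : nat,
    ExpTD nS nA n P pi Rw beta eps k
      (fun V => normL2 nS lam (fun s => V s - Vpi s)) V0
    <= normL2 nS lam (fun s => V0 s - Vpi s) * (1 - (1 - beta ^ n) * eps) ^ k
       + 8 / (1 - beta ^ n)
         * ((1 - beta ^ n) ^ 2 / (1 - beta) ^ 2 + 2 * beta ^ (2 * n) * normL2 nS lam Vpi)
         * eps.
Proof.
  intro k; rewrite Nat.mul_comm, pow_mult.
  assert (Hbn : 0 < beta ^ n < 1) by (split; [apply pow_lt | apply pow_lt_1_compat]; lra || lia).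
  assert (Hsmall : 16 * (1 + (beta ^ n) ^ 2) * eps <= 1 - beta ^ n).
  { rewrite Nat.mul_comm, pow_mult in Heps.
    replace (1 - beta ^ n) with (16 * (1 + (beta ^ n) ^ 2) * ((1 - beta ^ n) / (16 * (1 + (beta ^ n) ^ 2))))
      by (field; nra).
    apply Rmult_le_compat_l; nra. }
  apply td_mse_le; auto; nra.
Qed.
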